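(* Let $A=\begin{pmatrix} a&b\\ c&d\end{pmatrix}\in F$. Then $A$ commutes with both $C_1$ and $C_2$ if and only if $b=f_4h_2$, $c=-f_4h_3$, $d=a+f_1h_1+f_4h_4$ for some $f_1,f_4\in K[X]$.
   Context: $K$ is an infinite field of characteristic different from 2. Let $X=\{x_1,x_2,x_1',x_2'\}$ and $Y=\{y_1,y_2,y_1',y_2'\}$, and let $K[X;Y]\cong K[X]\otimes_K E(Y)$ be the free supercommutative algebra: the $x$'s are even commuting variables, the $y$'s are odd pairwise anticommuting variables, and $E(Y)$ is the Grassmann algebra on the vector space with basis $Y$. Put $C_1=\begin{pmatrix} x_1&y_1\\ y_1'&x_1'\end{pmatrix}$, $C_2=\begin{pmatrix} x_2&y_2\\ y_2'&x_2'\end{pmatrix}$, and let $F=K[C_1,C_2]$ be the unital $K$-subalgebra of $M_2(K[X;Y])$ generated by $C_1,C_2$. Define $h_1=y_1y_2y_1'y_2'$, $h_2=y_1y_2\big(y_1'(x_2'-x_2)-y_2'(x_1'-x_1)\big)$, $h_3=y_1'y_2'\big(y_1(x_2'-x_2)-y_2(x_1'-x_1)\big)$, $h_4=\big(y_1'(x_2'-x_2)-y_2'(x_1'-x_1)\big)\big(y_1(x_2'-x_2)-y_2(x_1'-x_1)\big)$. *)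

From HB Require Import structures.
From mathcomp Require Import all_boot all_order all_algebra.
From mathcomp Require Import mpoly.
Set Implicit Arguments. Unset Strict Implicit. Unset Printing Implicit Defensive.
Import Order.TTheory GRing.Theory.
Local Open Scope ring_scope.

(* An element of K[X;Y] = K[X] (x) E(Y) is written in the basis of
   ordered monomials y_S = y_{s1} ... y_{sk} (s1 < ... < sk, S : {set 'I_4}),
   i.e. as a function S |-> coefficient in K[X]. *)
Definition supalg (K : fieldType) := {ffun {set 'I_4} -> {mpoly K[4]}}.

Definition ninv (T U : {set 'I_4}) : nat :=
  #|[set p : 'I_4 * 'I_4 | [&& p.1 \in T, p.2 \in U & (p.2 < p.1)%N]]|.

(* y_T * y_U = (-1)^(ninv T U) y_(T u U) if T, U disjoint, 0 otherwise *)
Definition samul (K : fieldType) (u v : supalg K) : supalg K :=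
  [ffun S : {set 'I_4} => \sum_(T : {set 'I_4} | T \subset S)
      ((-1) ^+ ninv T (S :\: T)) * (u T * v (S :\: T))].

Definition emb (K : fieldType) (f : {mpoly K[4]}) : supalg K :=
  [ffun S : {set 'I_4} => if S == set0 then f else 0].

Definition sa1 (K : fieldType) : supalg K := emb 1.

Definition xv (K : fieldType) (i : 'I_4) : supalg K := emb 'X_i.
Definition yv (K : fieldType) (j : 'I_4) : supalg K :=
  [ffun S : {set 'I_4} => if S == [set j] then 1 else 0].

Definition x1 K := @xv K 0.
Definition x2 K := @xv K 1.
Definition x1' K := @xv K 2.
Definition x2' K := @xv K 3.
Definition y1 K := @yv K 0.
Definition y2 K := @yv K 1.
Definition y1' K := @yv K 2.
Definition y2' K := @yv K 3.

Definition smxmul (K : fieldType) (A B : 'M[supalg K]_2) : 'M[supalg K]_2 :=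
  \matrix_(i < 2, j < 2) \sum_(k < 2) samul (A i k) (B k j).

Definition mk2 (K : fieldType) (a b c d : supalg K) : 'M[supalg K]_2 :=
  \matrix_(i < 2, j < 2)
    if i == 0 then (if j == 0 then a else b) else (if j == 0 then c else d).

Definition C1 K : 'M[supalg K]_2 := mk2 (@x1 K) (@y1 K) (@y1' K) (@x1' K).
Definition C2 K : 'M[supalg K]_2 := mk2 (@x2 K) (@y2 K) (@y2' K) (@x2' K).

Definition kscal (K : fieldType) (c : K) : 'M[supalg K]_2 :=
  mk2 (emb c%:MP) 0 0 (emb c%:MP).

(* F = K[C1, C2]: the unital K-subalgebra of M_2(K[X;Y]) generated by C1, C2 *)
Inductive inF (K : fieldType) : 'M[supalg K]_2 -> Prop :=
  | inF_scal c : inF (kscal c)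
  | inF_C1 : inF (@C1 K)
  | inF_C2 : inF (@C2 K)
  | inF_add A B : inF A -> inF B -> inF (A + B)
  | inF_mul A B : inF A -> inF B -> inF (smxmul A B).

Definition h1 K : supalg K :=
  samul (samul (samul (@y1 K) (@y2 K)) (@y1' K)) (@y2' K).
Definition dx2 K : supalg K := @x2' K - @x2 K.
Definition dx1 K : supalg K := @x1' K - @x1 K.
Definition h2 K : supalg K :=
  samul (samul (@y1 K) (@y2 K))
        (samul (@y1' K) (@dx2 K) - samul (@y2' K) (@dx1 K)).
Definition h3 K : supalg K :=
  samul (samul (@y1' K) (@y2' K))
        (samul (@y1 K) (@dx2 K) - samul (@y2 K) (@dx1 K)).
Definition h4 K : supalg K :=
  samul (samul (@y1' K) (@dx2 K) - samul (@y2' K) (@dx1 K))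
        (samul (@y1 K) (@dx2 K) - samul (@y2 K) (@dx1 K)).

(* Every element of F is an even supermatrix: its diagonal entries a, d are even and
   its off-diagonal entries b, c odd, a property preserved by sums and products.  Even
   elements supercommute with everything, so A C_i = C_i A amounts to
     b y_i' = y_i c,   b (x_i' - x_i) = y_i (d - a),   c (x_i' - x_i) = y_i' (d - a).
   Comparing coefficients of the monomials y_S, the last two equations confine b to
   y1 y2 y1', y1 y2 y2' and c to y1 y1' y2', y2 y1' y2', and express the quadratic
   coefficients of d - a through those of b and c.  Two expressions of the same
   coefficient yield u (x1' - x1) + v (x2' - x2) = 0 for the two coefficients u, v of b,
   whose solutions in K[X] are the multiples of (x2' - x2, x1 - x1'): this is f4.  The
   coefficient of y1 y2 y1' y2' in d - a is unconstrained: this is f1.  Neither the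
   characteristic nor the infinitude of K plays a role. *)

From mathcomp Require Import all_boot all_order all_algebra.
From mathcomp Require Import mpoly.
From mathcomp Require Import ring.
Import GRing.Theory.
Local Open Scope ring_scope.
Set Implicit Arguments. Unset Strict Implicit.

Lemma addr_eq_subr (V : zmodType) (x y z w : V) : x + y = z + w <-> y - z = w - x.
Proof.
split=> [e | e]; apply/eqP.
  by rewrite subr_eq addrAC (addrC w) -e addrC addKr.
by rewrite -[y](subrK z) e addrA [x + _]addrC subrK addrC.
Qed.

(** * Subsets of the odd variables *)

(* Unlike the ring numerals [0 .. 3 : 'I_4], these literals reduce under [/=]. *)
Local Notation o0 := (@Ordinal 4 0 isT).
Local Notation o1 := (@Ordinal 4 1 isT).
Local Notation o2 := (@Ordinal 4 2 isT).
Local Notation o3 := (@Ordinal 4 3 isT).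

Definition set4 (a0 a1 a2 a3 : bool) : {set 'I_4} :=
  [set i : 'I_4 | nth false [:: a0; a1; a2; a3] i].

(* [s012] is the support {y1, y2, y1'} of y1 y2 y1', and so on. *)
Local Notation s02 := (set4 true false true false).
Local Notation s03 := (set4 true false false true).
Local Notation s12 := (set4 false true true false).
Local Notation s13 := (set4 false true false true).
Local Notation s012 := (set4 true true true false).
Local Notation s013 := (set4 true true false true).
Local Notation s023 := (set4 true false true true).
Local Notation s123 := (set4 false true true true).
Local Notation s0123 := (set4 true true true true).

Lemma set4E (S : {set 'I_4}) :
  S = set4 (o0 \in S) (o1 \in S) (o2 \in S) (o3 \in S).
Proof.
apply/setP => i; rewrite inE.
by case: i => [[|[|[|[|i]]]] Hi] //=; congr (_ \in S); apply/val_inj.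
Qed.

Lemma set4D a0 a1 a2 a3 b0 b1 b2 b3 :
  set4 a0 a1 a2 a3 :\: set4 b0 b1 b2 b3 =
  set4 (a0 && ~~ b0) (a1 && ~~ b1) (a2 && ~~ b2) (a3 && ~~ b3).
Proof.
apply/setP => -[[|[|[|[|i]]]] Hi]; rewrite !inE //=; exact: andbC.
Qed.

Lemma set4U a0 a1 a2 a3 b0 b1 b2 b3 :
  set4 a0 a1 a2 a3 :|: set4 b0 b1 b2 b3 =
  set4 (a0 || b0) (a1 || b1) (a2 || b2) (a3 || b3).
Proof. by apply/setP => -[[|[|[|[|i]]]] Hi]; rewrite !inE. Qed.

Lemma set4_eq a0 a1 a2 a3 b0 b1 b2 b3 :
  (set4 a0 a1 a2 a3 == set4 b0 b1 b2 b3) =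
  [&& a0 == b0, a1 == b1, a2 == b2 & a3 == b3].
Proof.
apply/eqP/and4P => [/setP eqS | [/eqP-> /eqP-> /eqP-> /eqP->] //].
by have := eqS o0; have := eqS o1; have := eqS o2; have := eqS o3;
  rewrite !inE /= => -> -> -> ->.
Qed.

Lemma set4I a0 a1 a2 a3 b0 b1 b2 b3 :
  set4 a0 a1 a2 a3 :&: set4 b0 b1 b2 b3 =
  set4 (a0 && b0) (a1 && b1) (a2 && b2) (a3 && b3).
Proof. by apply/setP => -[[|[|[|[|i]]]] Hi]; rewrite !inE. Qed.

Lemma set4_0 : set0 = set4 false false false false.
Proof. by apply/setP => -[[|[|[|[|i]]]] Hi]; rewrite !inE. Qed.

Lemma set4_o0 : [set o0] = set4 true false false false.
Proof. by apply/setP => -[[|[|[|[|i]]]] Hi]; rewrite !inE. Qed.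
Lemma set4_o1 : [set o1] = set4 false true false false.
Proof. by apply/setP => -[[|[|[|[|i]]]] Hi]; rewrite !inE. Qed.
Lemma set4_o2 : [set o2] = set4 false false true false.
Proof. by apply/setP => -[[|[|[|[|i]]]] Hi]; rewrite !inE. Qed.
Lemma set4_o3 : [set o3] = set4 false false false true.
Proof. by apply/setP => -[[|[|[|[|i]]]] Hi]; rewrite !inE. Qed.
Definition set4_1 := (set4_o0, set4_o1, set4_o2, set4_o3).

Lemma card_set4 a0 a1 a2 a3 : #|set4 a0 a1 a2 a3| = (a0 + a1 + a2 + a3)%N.
Proof.
rewrite -sum1_card big_mkcond /= !big_ord_recl big_ord0 !inE /=.
by case: a0; case: a1; case: a2; case: a3.
Qed.

Lemma ninvE (T U : {set 'I_4}) :
  ninv T U = (\sum_(i < 4) \sum_(j < 4) ((i \in T) && (j \in U) && (j < i)%N : nat))%N.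
Proof.
rewrite /ninv -sum1dep_card big_mkcond pair_big /=; apply: eq_bigr => -[i j] _ /=.
by rewrite andbA; case: (_ && _ && _).
Qed.

Lemma ninv_set4 a0 a1 a2 a3 b0 b1 b2 b3 :
  ninv (set4 a0 a1 a2 a3) (set4 b0 b1 b2 b3) =
  (a1 * b0 + a2 * (b0 + b1) + a3 * (b0 + b1 + b2))%N.
Proof.
rewrite ninvE !big_ord_recl !big_ord0 !inE /=.
by case: a0; case: a1; case: a2; case: a3; case: b0; case: b1; case: b2; case: b3.
Qed.

Lemma ninv_swap (T U : {set 'I_4}) :
  [disjoint T & U] -> (ninv T U + ninv U T)%N = (#|T| * #|U|)%N.
Proof.
move=> dTU; rewrite !ninvE [X in (_ + X)%N]exchange_big -big_split /=.
rewrite -!sum1_card big_distrlr [RHS]big_mkcond /=; apply: eq_bigr => i _.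
rewrite -big_split /=; case: (boolP (i \in T)) => iT /=.
  rewrite [RHS]big_mkcond; apply: eq_bigr => j _ /=.
  case: (boolP (j \in U)) => jU //=.
  have ne : i != j by apply: contraTneq iT => ->; rewrite (disjointFl dTU).
  by move: ne; rewrite -(inj_eq val_inj) /=; case: ltngtP.
by rewrite big1 // => j _; rewrite andbF.
Qed.

Lemma ninv0r (T : {set 'I_4}) : ninv T set0 = 0%N.
Proof. by apply: eq_card0 => -[i j]; rewrite !inE /= andbF. Qed.

Lemma ninv0l (T : {set 'I_4}) : ninv set0 T = 0%N.
Proof. by apply: eq_card0 => -[i j]; rewrite !inE. Qed.

Lemma sign_ninv_set4 (R : pzRingType) a0 a1 a2 a3 b0 b1 b2 b3 :
  (-1) ^+ ninv (set4 a0 a1 a2 a3) (set4 b0 b1 b2 b3) =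
  (-1) ^+ ((a1 && b0) (+) (a2 && (b0 (+) b1)) (+) (a3 && (b0 (+) b1 (+) b2))) :> R.
Proof.
rewrite -signr_odd ninv_set4.
by case: a1; case: a2; case: a3; case: b0; case: b1; case: b2.
Qed.

Lemma sign_ninv_swap (R : comPzRingType) (T U : {set 'I_4}) : [disjoint T & U] ->
  (-1) ^+ ninv U T = (-1) ^+ (odd #|T| && odd #|U|) * (-1) ^+ ninv T U :> R.
Proof.
move=> dTU; rewrite -oddM signr_odd -(ninv_swap dTU) exprD.
by rewrite mulrAC -mulrA signrMK.
Qed.

(** * Monomials and parity in K[X;Y] *)

Section Superalgebra.
Variable K : fieldType.
Local Notation P := {mpoly K[4]}.
Local Notation SA := (supalg K).
Implicit Types (u v w : SA) (f g : P) (S T U : {set 'I_4}).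

Definition monom T f : SA := [ffun S : {set 'I_4} => if S == T then f else 0].

Lemma emb_monom f : emb f = monom set0 f. Proof. by []. Qed.
Lemma yv_monom j : yv K j = monom [set j] 1. Proof. by []. Qed.

Lemma embB f g : emb (f - g) = emb f - emb g.
Proof. by apply/ffunP => S; rewrite !ffunE; case: ifP; rewrite ?subr0. Qed.

Lemma samul_monoml T f v : samul (monom T f) v =
  [ffun S : {set 'I_4} =>
     if T \subset S then (-1) ^+ ninv T (S :\: T) * (f * v (S :\: T)) else 0].
Proof.
apply/ffunP => S; rewrite !ffunE; case: ifP => TS.
  rewrite (bigD1 T) //= ffunE eqxx big1 ?addr0 // => T' /andP[_ /negbTE ne].
  by rewrite ffunE ne mul0r mulr0.
rewrite big1 // => T' T'S; rewrite ffunE; case: eqP => [eT|_].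
  by rewrite eT TS in T'S.
by rewrite mul0r mulr0.
Qed.

Lemma samul_monomr u T f : samul u (monom T f) =
  [ffun S : {set 'I_4} =>
     if T \subset S then (-1) ^+ ninv (S :\: T) T * (u (S :\: T) * f) else 0].
Proof.
have setDDK (A B : {set 'I_4}) : B \subset A -> A :\: (A :\: B) = B.
  by move=> BA; rewrite setDDr setDv set0U; apply/setIidPr.
apply/ffunP => S; rewrite !ffunE; case: ifP => TS.
  rewrite (bigD1 (S :\: T)) ?subsetDl //= ffunE setDDK // eqxx big1 ?addr0 //.
  move=> T' /andP[T'S ne]; rewrite ffunE; case: eqP => [eT|_]; last by rewrite !mulr0.
  by rewrite -eT setDDK ?eqxx in ne.
rewrite big1 // => T' T'S; rewrite ffunE; case: eqP => [eT|_].
  by rewrite -eT subsetDl in TS.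
by rewrite !mulr0.
Qed.

Lemma samul_embr u f : samul u (emb f) = [ffun S : {set 'I_4} => u S * f].
Proof.
apply/ffunP => S; rewrite samul_monomr !ffunE sub0set setD0.
by rewrite ninv0r mul1r.
Qed.

Lemma samul_embl f v : samul (emb f) v = [ffun S : {set 'I_4} => f * v S].
Proof.
apply/ffunP => S; rewrite samul_monoml !ffunE sub0set setD0.
by rewrite ninv0l mul1r.
Qed.

Lemma monom_mul T U f g : [disjoint T & U] ->
  samul (monom T f) (monom U g) = monom (T :|: U) ((-1) ^+ ninv T U * (f * g)).
Proof.
move=> dTU; apply/ffunP => S; rewrite samul_monoml !ffunE.
have [->|neS] := eqVneq S (T :|: U).
  by rewrite subsetUl setDUl setDv set0U (setDidPl _) ?eqxx // disjoint_sym.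
case: ifP => // TS; case: eqP => [SDT|_]; last by rewrite !mulr0.
by case/eqP: neS; rewrite -SDT -[LHS](setID S T) (setIidPr TS).
Qed.

Lemma samulBl u v w : samul (u - v) w = samul u w - samul v w.
Proof.
apply/ffunP => S; rewrite !ffunE -sumrB; apply: eq_bigr => T _.
by rewrite !ffunE mulrBl mulrBr.
Qed.

Lemma samulBr u v w : samul w (u - v) = samul w u - samul w v.
Proof.
apply/ffunP => S; rewrite !ffunE -sumrB; apply: eq_bigr => T _.
by rewrite !ffunE !mulrBr.
Qed.

Definition of_parity (p : bool) u := forall S, odd #|S| != p -> u S = 0.

Lemma of_parity_monom T f : of_parity (odd #|T|) (monom T f).
Proof. by move=> S pS; rewrite ffunE; case: eqP => // eST; move: pS; rewrite eST eqxx. Qed.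

Lemma of_parity_emb f : of_parity false (emb f).
Proof. by have := of_parity_monom (T := set0) f; rewrite cards0. Qed.

Lemma of_parity_yv j : of_parity true (yv K j).
Proof. by have := of_parity_monom (T := [set j]) (1 : P); rewrite cards1. Qed.

Lemma of_parity0 p : of_parity p 0.
Proof. by move=> S _; rewrite ffunE. Qed.

Lemma of_parityD p u v : of_parity p u -> of_parity p v -> of_parity p (u + v).
Proof. by move=> pu pv S pS; rewrite ffunE pu // pv // addr0. Qed.

Lemma of_parityB p u v : of_parity p u -> of_parity p v -> of_parity p (u - v).
Proof. by move=> pu pv S pS; rewrite !ffunE pu // pv // subr0. Qed.

Lemma of_parity_samul p q u v :
  of_parity p u -> of_parity q v -> of_parity (p (+) q) (samul u v).
Proof.
move=> pu pv S pS; rewrite ffunE; apply: big1 => T TS.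
have [uT|/pu->] := eqVneq (odd #|T|) p; last by rewrite mul0r mulr0.
have [vST|/pv->] := eqVneq (odd #|S :\: T|) q; last by rewrite !mulr0.
by move: pS; rewrite -(cardsID T S) (setIidPr TS) oddD uT vST eqxx.
Qed.

Lemma samul_monom_supercomm p u T f : of_parity p u ->
  samul u (monom T f) = (-1) ^+ (p && odd #|T|) *: samul (monom T f) u.
Proof.
move=> pu; apply/ffunP => S; rewrite samul_monoml samul_monomr !ffunE.
case: ifP => TS; last by rewrite scaler0.
have [->|uU] := eqVneq (u (S :\: T)) 0; first by rewrite !(mulr0, mul0r) scaler0.
have dTU : [disjoint T & S :\: T].
  by rewrite disjoint_sym; apply/setDidPl; rewrite setDDl setUid.
rewrite (sign_ninv_swap _ dTU) scaler_sign.
have <- : odd #|S :\: T| = p by apply: contraNeq uU => /pu ->; rewrite eqxx.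
by rewrite andbC; case: (_ && _); rewrite ?expr0 ?expr1; ring.
Qed.

Lemma samul_yv j u S :
  samul (yv K j) u S = if j \in S then (-1) ^+ ninv [set j] (S :\ j) * u (S :\ j) else 0.
Proof. by rewrite yv_monom samul_monoml ffunE sub1set mul1r. Qed.

Lemma samul_yvr u j S :
  samul u (yv K j) S = if j \in S then (-1) ^+ ninv (S :\ j) [set j] * u (S :\ j) else 0.
Proof. by rewrite yv_monom samul_monomr ffunE sub1set mulr1. Qed.

End Superalgebra.

(** * A syzygy in K[X] *)

Section Syzygy.
Variable K : fieldType.
Local Notation P := {mpoly K[4]}.

Definition d1 : P := 'X_2 - 'X_0.
Definition d2 : P := 'X_3 - 'X_1.

Lemma d1_neq0 : d1 != 0.
Proof.
apply/eqP => /(congr1 (mcoeff U_(2%R : 'I_4))).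
by rewrite mcoeffB !mcoeffXU mcoeff0 eqxx /= subr0 => /eqP; rewrite oner_eq0.
Qed.

Lemma d2_neq0 : d2 != 0.
Proof.
apply/eqP => /(congr1 (mcoeff U_(3%R : 'I_4))).
by rewrite mcoeffB !mcoeffXU mcoeff0 eqxx /= subr0 => /eqP; rewrite oner_eq0.
Qed.

Definition x2'_to_x2 : 4.-tuple P := [tuple (if i == 3%R then 'X_1 else 'X_i) | i < 4].

Definition eqmod_d2 (x y : P) := exists r, x = y + d2 * r.

Lemma eqmod_d2M x y x' y' :
  eqmod_d2 x y -> eqmod_d2 x' y' -> eqmod_d2 (x * x') (y * y').
Proof. by move=> [r ->] [r' ->]; exists (r * y' + y * r' + d2 * r * r'); ring. Qed.

Lemma eqmod_d2X x y k : eqmod_d2 x y -> eqmod_d2 (x ^+ k) (y ^+ k).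
Proof.
move=> xy; elim: k => [|k IHk]; first by exists 0; rewrite !expr0 mulr0 addr0.
by rewrite !exprS; apply: eqmod_d2M.
Qed.

Lemma eqmod_d2_subst p : eqmod_d2 p (p \mPo x2'_to_x2).
Proof.
elim/mpolyind: p => [|c m p _ _ [q IHp]].
  by exists 0; rewrite comp_mpoly0 mulr0 addr0.
have [r Xm] : eqmod_d2 'X_[m] ('X_[m] \mPo x2'_to_x2).
  rewrite comp_mpolyX mpolyXE_id.
  apply: (big_rec2 eqmod_d2); first by exists 0; rewrite mulr0 addr0.
  move=> i x y _ xy; apply: eqmod_d2M => //; apply: eqmod_d2X.
  rewrite tnth_mktuple; case: eqP => [->|_]; last by exists 0; rewrite mulr0 addr0.
  by exists 1; rewrite /d2; ring.
exists (c *: r + q).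
rewrite comp_mpolyD comp_mpolyZ {1}Xm {1}IHp scalerDr -!mul_mpolyC; ring.
Qed.

Lemma d1_subst : d1 \mPo x2'_to_x2 = d1.
Proof. by rewrite /d1 comp_mpolyB !comp_mpolyXU -!tnth_nth !tnth_mktuple. Qed.

Lemma d2_subst : d2 \mPo x2'_to_x2 = 0.
Proof. by rewrite /d2 comp_mpolyB !comp_mpolyXU -!tnth_nth !tnth_mktuple /= subrr. Qed.

(* Setting x2' := x2 kills d2 but not d1, so it kills u, which is then a multiple of d2. *)
Lemma syzygy_d1_d2 (u v : P) :
  u * d1 + v * d2 = 0 -> exists f, u = f * d2 /\ v = - f * d1.
Proof.
move=> uv; have := congr1 (comp_mpoly x2'_to_x2) uv.
rewrite rmorphD !rmorphM /= d1_subst d2_subst mulr0 addr0 comp_mpoly0 => /eqP.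
rewrite mulf_eq0 (negbTE d1_neq0) orbF => /eqP u0.
have [f uf] := eqmod_d2_subst u; rewrite u0 add0r in uf.
exists f; split; first by rewrite uf mulrC.
have : d2 * (f * d1 + v) = 0 by rewrite -uv uf; ring.
move/eqP; rewrite mulf_eq0 (negbTE d2_neq0) /= addr_eq0 => /eqP fv.
by rewrite mulNr fv opprK.
Qed.

End Syzygy.

(** * Even supermatrices *)

Section Supermatrices.
Variable K : fieldType.
Local Notation P := {mpoly K[4]}.
Local Notation SA := (supalg K).

Lemma mk2_eta (A : 'M[SA]_2) : A = mk2 (A 0 0) (A 0 1) (A 1 0) (A 1 1).
Proof.
apply/matrixP => i j; rewrite mxE.
by case: i => [[|[|?]] Hi]; case: j => [[|[|?]] Hj] //=; congr (A _ _); apply/val_inj.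
Qed.

Lemma mk2_mul (a b c d a' b' c' d' : SA) :
  smxmul (mk2 a b c d) (mk2 a' b' c' d') =
  mk2 (samul a a' + samul b c') (samul a b' + samul b d')
      (samul c a' + samul d c') (samul c b' + samul d d').
Proof.
apply/matrixP => i j; rewrite !mxE !big_ord_recl big_ord0 !mxE addr0.
by case: i => [[|[|?]] Hi]; case: j => [[|[|?]] Hj].
Qed.

Lemma mk2_inj (a b c d a' b' c' d' : SA) :
  mk2 a b c d = mk2 a' b' c' d' -> [/\ a = a', b = b', c = c' & d = d'].
Proof.
move=> e; have entry i j := congr1 (fun M : 'M[SA]_2 => M i j) e.
by move: (entry 0 0) (entry 0 1) (entry 1 0) (entry 1 1); rewrite !mxE.
Qed.

Definition even_supermx (A : 'M[SA]_2) :=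
  [/\ of_parity false (A 0 0), of_parity true (A 0 1),
      of_parity true (A 1 0) & of_parity false (A 1 1)].

Lemma even_supermx_mk2 a b c d :
  of_parity false a -> of_parity true b -> of_parity true c -> of_parity false d ->
  even_supermx (mk2 a b c d).
Proof. by move=> *; split; rewrite mxE. Qed.

Lemma even_supermx_C (x x' : P) (j j' : 'I_4) :
  even_supermx (mk2 (emb x) (yv K j) (yv K j') (emb x')).
Proof.
by apply: even_supermx_mk2;
  [apply: of_parity_emb | apply: of_parity_yv | apply: of_parity_yv | apply: of_parity_emb].
Qed.

Lemma inF_even (M : 'M[SA]_2) : inF M -> even_supermx M.
Proof.
elim=> [k | | | A B _ [a b c d] _ [a' b' c' d'] | A B _ [a b c d] _ [a' b' c' d']].
- by apply: even_supermx_mk2;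
    [apply: of_parity_emb | apply: of_parity0 | apply: of_parity0 | apply: of_parity_emb].
- exact: even_supermx_C.
- exact: even_supermx_C.
- by split; rewrite mxE; apply: of_parityD.
rewrite (mk2_eta A) (mk2_eta B) mk2_mul.
apply: even_supermx_mk2; apply: of_parityD.
- exact: of_parity_samul a a'.
- exact: of_parity_samul b c'.
- exact: of_parity_samul a b'.
- exact: of_parity_samul b d'.
- exact: of_parity_samul c a'.
- exact: of_parity_samul d c'.
- exact: of_parity_samul c b'.
- exact: of_parity_samul d d'.
Qed.

Local Notation Cmx x x' j j' := (mk2 (emb x) (yv K j) (yv K j') (emb x')).

Definition commute_eqs (j j' : 'I_4) (dx : P) (b c e : SA) :=
  [/\ samul b (yv K j') = samul (yv K j) c,
      samul b (emb dx) = samul (yv K j) e &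
      samul c (emb dx) = samul (yv K j') e].

(* The diagonal entries of [A] are even, hence commute with x, x', y_j, y_j'; the
   (1,1) entry of [A C = C A] then repeats the (0,0) one. *)
Lemma commute_C_iff (A : 'M[SA]_2) (x x' : P) (j j' : 'I_4) : even_supermx A ->
  smxmul A (Cmx x x' j j') = smxmul (Cmx x x' j j') A <->
  commute_eqs j j' (x' - x) (A 0 1) (A 1 0) (A 1 1 - A 0 0).
Proof.
have := mk2_eta A; move: (A 0 0) (A 0 1) (A 1 0) (A 1 1) => a b c d ->.
move=> [a_even b_odd c_odd d_even]; rewrite !mxE /= in a_even b_odd c_odd d_even.
have even_comm (u : SA) T (f : P) :
    of_parity false u -> samul u (monom T f) = samul (monom T f) u.
  by move/samul_monom_supercomm ->; rewrite expr0 scale1r.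
have emb_comm p (u : SA) (f : P) : of_parity p u -> samul u (emb f) = samul (emb f) u.
  by move/samul_monom_supercomm ->; rewrite cards0 andbF expr0 scale1r.
have odd_anticomm (u : SA) i : of_parity true u -> samul u (yv K i) = - samul (yv K i) u.
  by move/samul_monom_supercomm ->; rewrite cards1 expr1 scaleN1r.
rewrite /commute_eqs !mk2_mul embB !samulBr; split=> [/mk2_inj[E00 E01 E10 _] | [Eb Ee Ec]].
  rewrite (emb_comm false a) // in E00.
  rewrite (even_comm a) // -(emb_comm true b) // in E01.
  rewrite (even_comm d) // -!(emb_comm true c) // in E10.
  split; first exact: addrI E00.
    by move/addr_eq_subr: E01.
  by move/addr_eq_subr: E10 => ->.
congr mk2.
- by rewrite (emb_comm false a) // Eb.
- by rewrite (even_comm a) // -(emb_comm true b) //; apply/(iffRL (addr_eq_subr _ _ _ _)).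
- rewrite (even_comm d) // -(emb_comm true c) //.
  by apply/(iffRL (addr_eq_subr _ _ _ _)); rewrite Ec.
by rewrite (odd_anticomm c) // -[samul (yv K j') b]opprK -(odd_anticomm b) // Eb
  (emb_comm false d).
Qed.

End Supermatrices.

Section Generators.
Variable K : fieldType.
Local Notation P := {mpoly K[4]}.
Local Notation SA := (supalg K).
Local Notation d1 := (d1 K).
Local Notation d2 := (d2 K).

Lemma dx1E : dx1 K = emb d1. Proof. by rewrite embB. Qed.
Lemma dx2E : dx2 K = emb d2. Proof. by rewrite embB. Qed.

Lemma odd_generatorsE : [/\ y1 K = yv K o0, y2 K = yv K o1, y1' K = yv K o2 & y2' K = yv K o3].
Proof. by split; congr yv; apply/val_inj. Qed.

Lemma C1E : C1 K = mk2 (emb 'X_0) (yv K o0) (yv K o2) (emb 'X_2).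
Proof. by case: odd_generatorsE => <- _ <- _. Qed.

Lemma C2E : C2 K = mk2 (emb 'X_1) (yv K o1) (yv K o3) (emb 'X_3).
Proof. by case: odd_generatorsE => _ <- _ <-. Qed.

Ltac expand_monoms :=
  case: odd_generatorsE => -> -> -> ->;
  rewrite ?dx1E ?dx2E !yv_monom ?emb_monom !set4_1 ?set4_0;
  rewrite !(monom_mul, samulBr, samulBl, set4U);
  try by rewrite -setI_eq0 ?set4U set4I set4_0 set4_eq.

Lemma h1E : h1 K = monom s0123 1.
Proof.
rewrite /h1; expand_monoms.
by rewrite !ninv_set4 /=; congr monom; ring.
Qed.

Lemma h2E : h2 K = monom s012 d2 - monom s013 d1.
Proof.
rewrite /h2; expand_monoms.
by rewrite !ninv_set4 /=; congr (_ - _); congr monom; ring.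
Qed.

Lemma h3E : h3 K = monom s023 d2 - monom s123 d1.
Proof.
rewrite /h3; expand_monoms.
by rewrite !ninv_set4 /=; congr (_ - _); congr monom; ring.
Qed.

Lemma h4E : h4 K = monom s02 (- d2 ^+ 2) + monom s12 (d1 * d2) + monom s03 (d1 * d2)
                   - monom s13 (d1 ^+ 2).
Proof.
rewrite /h4; expand_monoms.
apply/ffunP => S; rewrite (set4E S) !ffunE !set4_eq !ninv_set4.
by case: (o0 \in S); case: (o1 \in S); case: (o2 \in S); case: (o3 \in S) => /=; ring.
Qed.

End Generators.

(** * Solving the commutation equations *)

Section CommutingSystem.
Variable K : fieldType.
Local Notation P := {mpoly K[4]}.
Local Notation SA := (supalg K).
Local Notation d1 := (d1 K).
Local Notation d2 := (d2 K).
Implicit Types S T : {set 'I_4}.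

Lemma emb_yv_eq_at (u v : SA) (f : P) j S : samul u (emb f) = samul (yv K j) v ->
  u S * f = if j \in S then (-1) ^+ ninv [set j] (S :\ j) * v (S :\ j) else 0.
Proof. by move/(congr1 (fun w : SA => w S)); rewrite samul_embr samul_yv ffunE. Qed.

Lemma emb_yv_eq_vanish (u v : SA) (f : P) j S :
  f != 0 -> samul u (emb f) = samul (yv K j) v -> j \notin S -> u S = 0.
Proof.
move=> f0 /(emb_yv_eq_at S) + jS; rewrite (negbTE jS) => /eqP.
by rewrite mulf_eq0 (negbTE f0) orbF => /eqP.
Qed.

Lemma emb_yv_eq_shift (u v : SA) (f : P) j T :
  samul u (emb f) = samul (yv K j) v -> j \notin T ->
  u (j |: T) * f = (-1) ^+ ninv [set j] T * v T.
Proof. by move=> /(emb_yv_eq_at (j |: T)) -> jT; rewrite setU11 setU1K. Qed.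

Variables b c e : SA.
Hypotheses (b_odd : of_parity true b) (c_odd : of_parity true c)
  (e_even : of_parity false e).
Hypotheses (b_d1 : samul b (emb d1) = samul (yv K o0) e)
  (c_d1 : samul c (emb d1) = samul (yv K o2) e)
  (b_d2 : samul b (emb d2) = samul (yv K o1) e)
  (c_d2 : samul c (emb d2) = samul (yv K o3) e).

Lemma b_vanish S : ~~ [&& o0 \in S, o1 \in S & odd #|S|] -> b S = 0.
Proof.
rewrite !negb_and => /or3P[S0 | S1 | pS].
- exact: emb_yv_eq_vanish (d1_neq0 K) b_d1 S0.
- exact: emb_yv_eq_vanish (d2_neq0 K) b_d2 S1.
- by apply: b_odd; rewrite (negbTE pS).
Qed.

Lemma c_vanish S : ~~ [&& o2 \in S, o3 \in S & odd #|S|] -> c S = 0.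
Proof.
rewrite !negb_and => /or3P[S2 | S3 | pS].
- exact: emb_yv_eq_vanish (d1_neq0 K) c_d1 S2.
- exact: emb_yv_eq_vanish (d2_neq0 K) c_d2 S3.
- by apply: c_odd; rewrite (negbTE pS).
Qed.

Lemma e_vanish S :
  ~~ [&& (o0 \in S) || (o1 \in S), (o2 \in S) || (o3 \in S) & ~~ odd #|S|] -> e S = 0.
Proof.
have sign_cancel n (x : P) : (-1) ^+ n * x = 0 -> x = 0.
  by move/eqP; rewrite mulf_eq0 signr_eq0 => /eqP.
rewrite !negb_and !negb_or negbK => /or3P[/andP[S0 S1] | /andP[S2 S3] | pS].
- move: (emb_yv_eq_shift b_d1 S0); rewrite b_vanish ?mul0r; first by move/esym/sign_cancel.
  by rewrite !inE (negbTE S1).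
- move: (emb_yv_eq_shift c_d1 S2); rewrite c_vanish ?mul0r; first by move/esym/sign_cancel.
  by rewrite !inE (negbTE S3).
- by apply: e_even; rewrite pS.
Qed.

Tactic Notation "component" constr(E) constr(S) :=
  have := emb_yv_eq_at S E; rewrite !set4_1 !inE /= set4D sign_ninv_set4 /=;
  rewrite ?expr0 ?expr1 ?mulN1r ?mul1r.

Ltac check_components vanish facts :=
  apply/ffunP; let A := fresh "A" in move=> A;
  rewrite ?samul_embl ?h1E ?h2E ?h3E ?h4E ?ffunE (set4E A);
  case: (o0 \in A); case: (o1 \in A); case: (o2 \in A); case: (o3 \in A);
  rewrite ?ffunE ?set4_eq /=;
  first [rewrite vanish; [ring | by rewrite !inE card_set4] | rewrite ?facts; ring].

(* The quadratic coefficients of e are read off from b in two ways (via d1 and d2);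
   comparing them gives the syzygy that produces f4. *)
Lemma commute_eqs_solution : exists f1 f4 : P,
  b = samul (emb f4) (h2 K) /\ c = - samul (emb f4) (h3 K) /\
  e = samul (emb f1) (h1 K) + samul (emb f4) (h4 K).
Proof.
have e12E : e s12 = b s012 * d1 by component b_d1 s012.
have e13E : e s13 = b s013 * d1 by component b_d1 s013.
have e02E : e s02 = - (b s012 * d2) by component b_d2 s012; move=> ->; rewrite opprK.
have e03E : e s03 = - (b s013 * d2) by component b_d2 s013; move=> ->; rewrite opprK.
have c023E : c s023 = - b s012.
  by apply: (mulIf (d2_neq0 K)); rewrite mulNr -e02E; component c_d2 s023.
have c123E : c s123 = - b s013.
  by apply: (mulIf (d1_neq0 K)); rewrite mulNr -e13E; component c_d1 s123.
have b013_d2 : b s013 * d2 = - (b s012 * d1).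
  by rewrite -mulNr -c023E; component c_d1 s023; move=> ->; rewrite e03E opprK.
have [f [b012E b013E]] : exists f, b s012 = f * d2 /\ b s013 = - f * d1.
  by apply: syzygy_d1_d2; rewrite b013_d2 subrr.
exists (e s0123), f; split; [|split].
- check_components b_vanish (b012E, b013E).
- check_components c_vanish (c023E, c123E, b012E, b013E).
- check_components e_vanish (e12E, e13E, e02E, e03E, b012E, b013E).
Qed.

End CommutingSystem.

Section SolvingCommuteEqs.
Variable K : fieldType.
Local Notation P := {mpoly K[4]}.
Local Notation SA := (supalg K).

(* The rewrite [rule] is named explicitly: matching [samul _ (emb _)] against a
   [samul _ (yv _ _)] makes unification unfold both finite functions, which is slow. *)
Ltac check_component_eq rule facts :=
  apply/ffunP; let A := fresh "A" in move=> A;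
  rewrite rule samul_yv (set4E A);
  case: (o0 \in A); case: (o1 \in A); case: (o2 \in A); case: (o3 \in A);
  rewrite !set4_1 !inE /= ?set4D ?sign_ninv_set4 ?ffunE ?facts ?ffunE ?set4_eq /=; ring.

Lemma commute_eqs_iff (a b c d : SA) :
  of_parity true b -> of_parity true c -> of_parity false (d - a) ->
  commute_eqs o0 o2 (d1 K) b c (d - a) /\ commute_eqs o1 o3 (d2 K) b c (d - a) <->
  exists f1 f4 : P, b = samul (emb f4) (h2 K) /\ c = - samul (emb f4) (h3 K) /\
    d = a + samul (emb f1) (h1 K) + samul (emb f4) (h4 K).
Proof.
move=> b_odd c_odd e_even; split.
  case=> -[_ b_d1 c_d1] [_ b_d2 c_d2].
  have [f1 [f4 [bE [cE eE]]]] :=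
    commute_eqs_solution b_odd c_odd e_even b_d1 c_d1 b_d2 c_d2.
  by exists f1, f4; do 2!split => //; rewrite -addrA -eE addrC subrK.
move=> [f1 [f4 [-> [-> dE]]]].
have -> : d - a = samul (emb f1) (h1 K) + samul (emb f4) (h4 K).
  by rewrite dE -(addrA a) addrAC subrr add0r.
have bS S : samul (emb f4) (h2 K) S = f4 * h2 K S by rewrite samul_embl ffunE.
have cS S : (- samul (emb f4) (h3 K)) S = - (f4 * h3 K S).
  by rewrite samul_embl !ffunE.
have eS S : (samul (emb f1) (h1 K) + samul (emb f4) (h4 K)) S =
            f1 * h1 K S + f4 * h4 K S.
  by rewrite !samul_embl !ffunE.
(* Generalized for the same reason: rewriting must not unfold these products. *)
move: (samul (emb f4) (h2 K)) (- samul (emb f4) (h3 K))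
  (samul (emb f1) (h1 K) + samul (emb f4) (h4 K)) bS cS eS => b' c' e bS cS eS.
rewrite h1E h2E h3E h4E in bS cS eS.
by split; (split; [ check_component_eq samul_yvr (bS, cS, eS)
                  | check_component_eq samul_embr (bS, cS, eS) ..]).
Qed.

End SolvingCommuteEqs.

Theorem corollary1 (K : fieldType)
    (K_infinite : forall s : seq K, exists k : K, k \notin s)
    (K_char : (2%:R : K) != 0)
    (A : 'M[supalg K]_2) (A_in_F : inF A) :
  (smxmul A (@C1 K) = smxmul (@C1 K) A /\ smxmul A (@C2 K) = smxmul (@C2 K) A)
  <->
  (exists f1 f4 : {mpoly K[4]},
     A 0 1 = samul (emb f4) (@h2 K) /\
     A 1 0 = - samul (emb f4) (@h3 K) /\
     A 1 1 = A 0 0 + samul (emb f1) (@h1 K) + samul (emb f4) (@h4 K)).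
Proof.
have A_even := inF_even A_in_F.
have [a_even b_odd c_odd d_even] := A_even.
have C1_iff := commute_C_iff 'X_0 'X_2 o0 o2 A_even.
have C2_iff := commute_C_iff 'X_1 'X_3 o1 o3 A_even.
rewrite -(commute_eqs_iff b_odd c_odd (of_parityB d_even a_even)) C1E C2E.
by split=> -[comm1 comm2]; split; by [apply/C1_iff | apply/C2_iff].
Qed.
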